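(* For all non-negative integers $i,j$ with $k:=i+j\ge 1$ and all positive integers $\ell,n$, there exists a bipartite graph $G$ with pathwidth at most $k+1$ such that for every graph $H$ and every path $P$, if $G$ is isomorphic to a subgraph of $H\boxtimes P\boxtimes K_\ell$, then $P_n+K_{i,j}$ is a $2$-small minor of $H$.
   Context: Graphs are finite and simple. $P_n$ is the path on $n$ vertices, $K_\ell$ the complete graph on $\ell$ vertices, and $K_{i,j}$ the complete bipartite graph with parts of sizes $i$ and $j$ (so $K_{1,0}$ is a single vertex). The complete join $G+H$ is the disjoint union of $G$ and $H$ with all edges between them added. A model of $F$ in $H$ is a map $\mu$ assigning to each $v\in V(F)$ a connected subgraph $\mu(v)$ of $H$, with the $\mu(v)$ pairwise vertex-disjoint, and with $\mu(v),\mu(w)$ joined by an edge of $H$ whenever $vw\in E(F)$; $F$ is an $s$-small minor of $H$ if there is such a model with $|V(\mu(v))|\le s$ for all $v$. The strong product $G\boxtimes H$ has vertex set $V(G)\times V(H)$ with $(v,w)\sim(v',w')$ if ($v=v'$ and $ww'\in E(H)$) or ($w=w'$ and $vv'\in E(G)$) or ($vv'\in E(G)$ and $ww'\in E(H)$). *)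

From mathcomp Require Import all_boot.
Set Implicit Arguments. Unset Strict Implicit. Unset Printing Implicit Defensive.

Record sgraph := SGraph {
  vertex : finType;
  adj : rel vertex;
  adj_sym : symmetric adj;
  adj_irr : irreflexive adj }.

Definition path_adj n : rel 'I_n := fun x y => (x.+1 == y :> nat) || (y.+1 == x :> nat).
Lemma path_adj_sym n : symmetric (@path_adj n).
Proof. by move=> x y; rewrite /path_adj orbC. Qed.
Lemma path_adj_irr n : irreflexive (@path_adj n).
Proof. by move=> x; rewrite /path_adj orbb; elim: (nat_of_ord x) => // m IH. Qed.
Definition Pgraph n := SGraph (@path_adj_sym n) (@path_adj_irr n).

Definition complete_adj l : rel 'I_l := fun x y => x != y.
Lemma complete_adj_sym l : symmetric (@complete_adj l).
Proof. by move=> x y; rewrite /complete_adj eq_sym. Qed.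
Lemma complete_adj_irr l : irreflexive (@complete_adj l).
Proof. by move=> x; rewrite /complete_adj eqxx. Qed.
Definition Kgraph l := SGraph (@complete_adj_sym l) (@complete_adj_irr l).

Definition cbip_adj i j : rel ('I_i + 'I_j)%type := fun x y =>
  match x, y with inl _, inr _ => true | inr _, inl _ => true | _, _ => false end.
Lemma cbip_adj_sym i j : symmetric (@cbip_adj i j).
Proof. by case=> x; case=> y. Qed.
Lemma cbip_adj_irr i j : irreflexive (@cbip_adj i j).
Proof. by case. Qed.
Definition Kbip i j := SGraph (@cbip_adj_sym i j) (@cbip_adj_irr i j).

Definition join_adj (G H : sgraph) : rel (vertex G + vertex H)%type := fun x y =>
  match x, y with
  | inl a, inl b => adj a b
  | inr a, inr b => adj a b
  | _, _ => true end.
Lemma join_adj_sym G H : symmetric (@join_adj G H).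
Proof. by case=> x; case=> y //=; apply: adj_sym. Qed.
Lemma join_adj_irr G H : irreflexive (@join_adj G H).
Proof. by case=> x /=; apply: adj_irr. Qed.
Definition gjoin G H := SGraph (@join_adj_sym G H) (@join_adj_irr G H).

Definition strong_adj (G H : sgraph) : rel (vertex G * vertex H)%type := fun x y =>
  [|| (x.1 == y.1) && adj x.2 y.2, (x.2 == y.2) && adj x.1 y.1
    | adj x.1 y.1 && adj x.2 y.2].
Lemma strong_adj_sym G H : symmetric (@strong_adj G H).
Proof.
move=> x y; rewrite /strong_adj (eq_sym x.1) (eq_sym x.2)
  (adj_sym x.1) (adj_sym x.2) //.
Qed.
Lemma strong_adj_irr G H : irreflexive (@strong_adj G H).
Proof. by move=> x; rewrite /strong_adj !adj_irr !andbF. Qed.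
Definition strong G H := SGraph (@strong_adj_sym G H) (@strong_adj_irr G H).

Definition subgraph_iso (G X : sgraph) : Prop :=
  exists f : vertex G -> vertex X,
    injective f /\ forall u v, adj u v -> adj (f u) (f v).

Definition bipartite (G : sgraph) : Prop :=
  exists c : vertex G -> bool, forall u v, adj u v -> c u != c v.

Definition path_decomposition {G : sgraph} (B : seq {set vertex G}) : Prop :=
  [/\ forall v, exists2 X, X \in B & v \in X,
      forall u v, adj u v -> exists2 X, X \in B & (u \in X) && (v \in X)
    & forall v a b c, a <= b <= c -> c < size B ->
        v \in nth set0 B a -> v \in nth set0 B c -> v \in nth set0 B b].

Definition pathwidth_le (G : sgraph) (w : nat) : Prop :=
  exists B : seq {set vertex G}, path_decomposition B /\ forall X, X \in B -> #|X| <= w.+1.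

Definition connected_set (G : sgraph) (S : {set vertex G}) : Prop :=
  S != set0 /\
  forall x y, x \in S -> y \in S ->
    connect [rel a b | [&& a \in S, b \in S & adj a b]] x y.

Definition small_minor (s : nat) (F H : sgraph) : Prop :=
  exists mu : vertex F -> {set vertex H},
    [/\ forall v, connected_set (mu v),
        forall v, #|mu v| <= s,
        forall v w, v != w -> [disjoint mu v & mu w]
      & forall v w, adj v w ->
          exists x y, [/\ x \in mu v, y \in mu w & adj x y]].

(* The graph is built from a long path P_N by i + j rounds, each adding an
   apex joined to one colour class of each of M + 1 copies of the previous
   graph; it is bipartite, and nesting the copies' intervals gives a path
   decomposition with bags of size at most k + 2.  Embed it in H x P x K_l.
   Every vertex is within distance two of the top apex, so the projection phi
   onto H has fibres of size at most M = 5l.  Hence one of the M + 1 copies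
   misses the fibre of the apex's image c; recursing into that copy, c is a
   new branch vertex adjacent to the images of the opposite colour class,
   hence to all branch sets built below it whose side differs.  At the
   bottom, phi maps P_N to a walk in H that visits every vertex at most M
   times and at least (M + 2)^(2n) vertices in all, so it contains a path on
   2n + 1 vertices; its consecutive pairs are the branch sets of P_n, and
   each pair meets both colour classes. *)

From mathcomp Require Import all_boot zify.
Set Implicit Arguments. Unset Strict Implicit. Unset Printing Implicit Defensive.

Definition reflc (T : eqType) (R : rel T) : rel T := fun a b => (a == b) || R a b.

Definition ndistinct_but (T : eqType) (x : T) (s : seq T) :=
  size (undup [seq y <- s | y != x]).

Section DistinctCount.
Variables (T : eqType) (x : T).

Lemma ndistinct_but_cat s1 s2 :
  ndistinct_but x (s1 ++ s2) <= ndistinct_but x s1 + ndistinct_but x s2.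
Proof.
rewrite /ndistinct_but filter_cat undup_cat size_cat leq_add2r size_filter.
exact: count_size.
Qed.

Lemma ndistinct_but_cons_eq s : ndistinct_but x (x :: s) = ndistinct_but x s.
Proof. by rewrite /ndistinct_but /= eqxx. Qed.

Lemma ndistinct_but_notin s : x \notin s -> ndistinct_but x s = size (undup s).
Proof.
move=> xNs; rewrite /ndistinct_but; congr (size (undup _)).
by apply/all_filterP/allP => y ys; apply: contraNneq xNs => <-.
Qed.

Lemma size_undup_cons s : size (undup (x :: s)) = (ndistinct_but x s).+1.
Proof.
rewrite -(count_predC (pred1 x)) count_uniq_mem ?undup_uniq // mem_undup mem_head.
by rewrite add1n -size_filter filter_undup -ndistinct_but_cons_eq.
Qed.

End DistinctCount.

Lemma size_le_undup (T : eqType) M (s : seq T) :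
  (forall y, count_mem y s <= M) -> size s <= M * size (undup s).
Proof.
move=> cnt; rewrite -(perm_size (perm_count_undup s)) size_flatten /shape -map_comp.
rewrite -sum1_size big_distrr /= sumnE big_map.
by apply: leq_sum => y _; rewrite /= size_nseq muln1.
Qed.

Lemma split_first_occurrence (T : eqType) (x : T) s :
  x \in s -> exists s1 s2, s = s1 ++ x :: s2 /\ x \notin s1.
Proof.
move=> xs; exists (take (index x s) s), (drop (index x s).+1 s).
by rewrite -{1}(cat_take_drop (index x s) s) (drop_nth x) ?index_mem ?nth_index
           ?in_take // ltnn.
Qed.

Section Walks.
Variables (T : eqType) (R : rel T).

Definition walk_segment x s z s1 :=
  [/\ R x z, x \notin z :: s1, path (reflc R) z s1 & subseq (z :: s1) s].

Lemma walk_prefix_segment x z s1 s :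
  path (reflc R) x (z :: s1) -> x \notin z :: s1 ->
  subseq (z :: s1) s -> walk_segment x s z s1.
Proof.
case/andP=> /orP[/eqP->|Rxz] pz xNs sub; first by rewrite mem_head in xNs.
by split.
Qed.

Lemma walk_segment_subseq x s s' z s1 :
  subseq s s' -> walk_segment x s z s1 -> walk_segment x s' z s1.
Proof. by move=> ss' [? ? ? sub]; split=> //; apply: subseq_trans sub ss'. Qed.

Lemma walk_segment_notin x c s :
  x \notin s -> path (reflc R) x s -> 0 < ndistinct_but x s ->
  exists z s1, walk_segment x s z s1 /\
               ndistinct_but x s <= c.+1 * size (undup (z :: s1)).
Proof.
case: s => [//|z s1] xNs ps _; exists z, s1; split; first exact: walk_prefix_segment.
by rewrite ndistinct_but_notin // leq_pmull.
Qed.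

(* Cutting the walk at its [<= c] returns to [x] leaves [<= c.+1] [x]-free
   pieces, and one of them carries a [1/c.+1] share of the distinct vertices. *)
Lemma walk_large_segment x c s :
  count_mem x s <= c -> path (reflc R) x s -> 0 < ndistinct_but x s ->
  exists z s1, walk_segment x s z s1 /\
               ndistinct_but x s <= c.+1 * size (undup (z :: s1)).
Proof.
elim: c s => [|c IH] s cnt ps pos; have [xs|xNs] := boolP (x \in s);
  try exact: walk_segment_notin.
  by move: cnt; rewrite leqn0 => /eqP/count_memPn; rewrite xs.
have [s1 [s2 [def_s xNs1]]] := split_first_occurrence xs.
move: cnt ps pos; rewrite def_s count_cat /= eqxx add1n.
rewrite (count_memPn xNs1) add0n ltnS cat_path /= => cnt /andP[ps1 /andP[_ ps2]] pos.
have split_s : ndistinct_but x s <= ndistinct_but x s1 + ndistinct_but x s2.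
  by rewrite def_s (leq_trans (ndistinct_but_cat _ _ _)) // ndistinct_but_cons_eq.
have sub1 : subseq s1 s by rewrite def_s prefix_subseq.
have sub2 : subseq s2 s.
  by rewrite def_s (subseq_trans (subseq_cons s2 x)) // suffix_subseq.
rewrite -def_s in pos *; clear def_s.
have [e2|] := posnP (ndistinct_but x s2).
  rewrite e2 addn0 in split_s.
  case: s1 ps1 xNs1 sub1 split_s => [|z s1] ps1 xNs1 sub1 split_s.
    by move: split_s pos; rewrite [ndistinct_but x [::]]/ndistinct_but /=; lia.
  exists z, s1; split; first exact: walk_prefix_segment.
  by rewrite (leq_trans split_s) // ndistinct_but_notin // leq_pmull.
case/(IH s2 cnt ps2) => z [s3 [seg3 le3]].
have seg3' := walk_segment_subseq sub2 seg3.
case: s1 ps1 xNs1 sub1 split_s => [|z1 s1] ps1 xNs1 sub1 split_s.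
  exists z, s3; split=> //; apply: leq_trans split_s _.
  by rewrite /ndistinct_but /= (leq_trans le3) // leq_mul2r leqnSn orbT.
have seg1 := walk_prefix_segment ps1 xNs1 sub1.
rewrite (ndistinct_but_notin xNs1) in split_s.
have [le31|lt13] := leqP (size (undup (z :: s3))) (size (undup (z1 :: s1))).
- have le1 : ndistinct_but x s <= c.+2 * size (undup (z1 :: s1)) by nia.
  by exists z1, s1; split; last exact: le1.
- have le1 : ndistinct_but x s <= c.+2 * size (undup (z :: s3)) by nia.
  by exists z, s3; split; last exact: le1.
Qed.

Lemma walk_long_path M d x s :
  (forall y, count_mem y (x :: s) <= M) -> path (reflc R) x s ->
  M.+2 ^ d <= size (undup (x :: s)) ->
  exists q, [/\ uniq (x :: q), size q = d, path R x q & {subset q <= s}].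
Proof.
elim: d x s => [|d IH] x s cnt ps D; first by exists [::].
have cnt_x : count_mem x s <= M by have := cnt x; rewrite /= eqxx add1n => /ltnW.
have pos : 0 < ndistinct_but x s.
  by move: D; rewrite size_undup_cons expnS; have := expn_gt0 M.+2 d; nia.
have [z [s1 [[Rxz xNz ps1 sub] le1]]] := walk_large_segment cnt_x ps pos.
have D1 : M.+2 ^ d <= size (undup (z :: s1)).
  by move: D le1; rewrite size_undup_cons expnS; nia.
have cnt1 y : count_mem y (z :: s1) <= M.
  by rewrite (leq_trans _ (cnt y)) // (leq_trans (leq_count_subseq _ sub)) ?leq_addl.
have [q [uq sq pq qs1]] := IH z s1 cnt1 ps1 D1.
exists (z :: q); split; rewrite /= ?sq ?Rxz //.
- rewrite -cons_uniq uq andbT; apply: contra xNz; rewrite !inE => /predU1P[->|/qs1->].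
    by rewrite eqxx.
  by rewrite orbT.
- move=> y /predU1P[->|/qs1 ys1]; apply: (mem_subseq sub); first exact: mem_head.
  by rewrite inE ys1 orbT.
Qed.

Lemma sorted_walk_long_path M d s :
  (forall y, count_mem y s <= M) -> sorted (reflc R) s -> M.+2 ^ d <= size (undup s) ->
  exists p, [/\ uniq p, size p = d.+1 & sorted R p].
Proof.
case: s => [|x s] cnt ps D; first by move: D; rewrite leqn0 expn_eq0.
by have [q [uq sq pq _]] := walk_long_path cnt ps D; exists (x :: q); rewrite /= sq.
Qed.

End Walks.

Definition interval_bag (T : finType) (lo hi : T -> nat) p : {set T} :=
  [set v | lo v <= p <= hi v].

Section IntervalDecomposition.
Variables (G : sgraph) (L : nat) (lo hi : vertex G -> nat).
Hypothesis lo_hi : forall v, lo v <= hi v < L.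
Hypothesis adj_overlap :
  forall u v, adj u v -> exists p, lo u <= p <= hi u /\ lo v <= p <= hi v.

Lemma interval_path_decomposition :
  path_decomposition (mkseq (interval_bag lo hi) L).
Proof.
have bagP p : p < L -> interval_bag lo hi p \in mkseq (interval_bag lo hi) L.
  by move=> ltpL; apply/mapP; exists p; rewrite ?mem_iota.
split.
- move=> v; have /andP[le_lh lt_hL] := lo_hi v.
  by exists (interval_bag lo hi (lo v)); rewrite ?bagP ?inE ?leqnn ?(leq_ltn_trans le_lh).
- move=> u v /adj_overlap[p [pu pv]]; have /andP[_ lt_hL] := lo_hi u.
  exists (interval_bag lo hi p); rewrite ?inE ?pu ?pv ?bagP //.
  by case/andP: pu => _ /leq_ltn_trans->.
- move=> v a b c /andP[le_ab le_bc]; rewrite size_mkseq => lt_cL.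
  rewrite !nth_mkseq ?(leq_ltn_trans le_bc) ?(leq_ltn_trans (leq_trans le_ab le_bc)) //.
  by rewrite !inE => /andP[lo_a _] /andP[_ c_hi]; rewrite (leq_trans lo_a) ?(leq_trans le_bc).
Qed.

Lemma interval_pathwidth w :
  (forall p, #|interval_bag lo hi p| <= w.+1) -> pathwidth_le G w.
Proof.
move=> bag_card; exists (mkseq (interval_bag lo hi) L).
by split=> [|X /mapP[p _ ->]]; [exact: interval_path_decomposition | exact: bag_card].
Qed.

End IntervalDecomposition.

(* In [tower N C (b :: rs)], [None] is the apex (of colour [b]) and
   [Some (c, u)] is the vertex [u] of the [c]-th copy of [tower N C rs]. *)
Fixpoint tower_vertex N C (rs : seq bool) : finType :=
  match rs with
  | [::] => 'I_N
  | _ :: rs' => option ('I_C * tower_vertex N C rs')%type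
  end.

Fixpoint tower_colour N C rs : tower_vertex N C rs -> bool :=
  match rs return tower_vertex N C rs -> bool with
  | [::] => fun k => odd k
  | b :: rs' => fun v => if v is Some (_, u) then @tower_colour N C rs' u else b
  end.

Fixpoint tower_adj N C rs : rel (tower_vertex N C rs) :=
  match rs return rel (tower_vertex N C rs) with
  | [::] => @path_adj N
  | b :: rs' => fun x y =>
    match x, y with
    | None, None => false
    | None, Some (_, u) | Some (_, u), None => @tower_colour N C rs' u != b
    | Some (c, u), Some (c', u') => (c == c') && @tower_adj N C rs' u u'
    end
  end.

Lemma tower_adj_sym N C rs : symmetric (@tower_adj N C rs).
Proof.
elim: rs => [|b rs IH] /=; first exact: path_adj_sym.
by case=> [[c u]|]; case=> [[c' u']|] //=; rewrite eq_sym IH.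
Qed.

Lemma tower_adj_irr N C rs : irreflexive (@tower_adj N C rs).
Proof.
elim: rs => [|b rs IH] /=; first exact: path_adj_irr.
by case=> [[c u]|] //=; rewrite IH andbF.
Qed.

Definition tower N C rs := SGraph (@tower_adj_sym N C rs) (@tower_adj_irr N C rs).

Lemma tower_colour_adj N C rs (u v : tower_vertex N C rs) :
  tower_adj u v -> tower_colour u != tower_colour v.
Proof.
elim: rs u v => [|b rs IH] /=.
  by move=> u v /orP[] /eqP <-; rewrite /= ?negbK; case: (odd _).
case=> [[c u]|]; case=> [[c' u']|] //=; first by case/andP=> _ /IH.
by rewrite eq_sym.
Qed.

Lemma tower_bipartite N C rs : bipartite (tower N C rs).
Proof. by exists (@tower_colour N C rs); apply: tower_colour_adj. Qed.

Section TowerRadius.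
Variables N C : nat.
Hypotheses (N_gt1 : 1 < N) (C_gt0 : 0 < C).

Lemma tower_vertex_inhabited rs : tower_vertex N C rs.
Proof. by case: rs => [|b rs]; [exact: Ordinal (ltnW N_gt1) | exact: None]. Qed.

Lemma tower_neighbour rs (u : tower_vertex N C rs) : exists v, tower_adj u v.
Proof.
elim: rs u => [|b rs IH] /=.
  move=> u; have [ltuN|] := ltnP u.+1 N.
    by exists (Ordinal ltuN); rewrite /path_adj /= eqxx.
  have lt_predN : u.-1 < N by rewrite (leq_ltn_trans (leq_pred _)).
  by exists (Ordinal lt_predN); rewrite /path_adj /=; lia.
case=> [[c u]|]; first by have [v uv] := IH u; exists (Some (c, v)); rewrite /= eqxx.
have [v uv] := IH (tower_vertex_inhabited rs).
have [Eb|] := eqVneq (tower_colour (tower_vertex_inhabited rs)) b.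
  exists (Some (Ordinal C_gt0, v)) => /=.
  by move/tower_colour_adj: uv; rewrite Eb eq_sym.
by exists (Some (Ordinal C_gt0, tower_vertex_inhabited rs)).
Qed.

Lemma tower_apex_radius2 b rs (v : vertex (tower N C (b :: rs))) :
  exists w, reflc (@adj (tower N C (b :: rs))) None w && reflc (@adj _) w v.
Proof.
case: v => [[c u]|]; last by exists None; rewrite /reflc eqxx.
have [Ecu|Ncu] := eqVneq (tower_colour u) b; last first.
  by exists (Some (c, u)); rewrite /reflc /= Ncu eqxx.
have [u' uu'] := tower_neighbour u.
exists (Some (c, u')); rewrite /reflc /= eqxx tower_adj_sym uu' orbT andbT.
by move/tower_colour_adj: uu'; rewrite Ecu eq_sym.
Qed.

End TowerRadius.

Section TowerIntervals.
Variables N C : nat.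
Hypothesis C_gt0 : 0 < C.

Fixpoint tower_len (rs : seq bool) : nat :=
  if rs is _ :: rs' then C * tower_len rs' else N.+1.

Fixpoint tower_lo rs : tower_vertex N C rs -> nat :=
  match rs return tower_vertex N C rs -> nat with
  | [::] => fun k => k
  | b :: rs' => fun v => if v is Some (c, u) then c * tower_len rs' + tower_lo u else 0
  end.

Fixpoint tower_hi rs : tower_vertex N C rs -> nat :=
  match rs return tower_vertex N C rs -> nat with
  | [::] => fun k => k.+1
  | b :: rs' => fun v =>
    if v is Some (c, u) then c * tower_len rs' + tower_hi u else (C * tower_len rs').-1
  end.

Lemma tower_len_gt0 rs : 0 < tower_len rs.
Proof. by elim: rs => [|b rs IH] //=; rewrite muln_gt0 C_gt0. Qed.

Lemma block_offset_lt (c : 'I_C) L x : x < L -> c * L + x < C * L.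
Proof. by move=> ltxL; have := ltn_ord c; nia. Qed.

Lemma tower_lo_hi rs (v : tower_vertex N C rs) : tower_lo v <= tower_hi v < tower_len rs.
Proof.
elim: rs v => [|b rs IH] /= => [v|]; first by rewrite leqnSn ltnS ltn_ord.
have L_gt0 := tower_len_gt0 rs.
case=> [[c u]|] /=; last by lia.
have /andP[le_lh lt_hL] := IH u.
by rewrite leq_add2l le_lh block_offset_lt.
Qed.

Lemma tower_adj_overlap rs (u v : tower_vertex N C rs) : tower_adj u v ->
  exists p, tower_lo u <= p <= tower_hi u /\ tower_lo v <= p <= tower_hi v.
Proof.
elim: rs u v => [|b rs IH] /= => [u v|].
  by move=> /orP[] /eqP E; [exists v | exists u]; lia.
have apex_overlap (c : 'I_C) (u : tower_vertex N C rs) :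
    exists p, 0 <= p <= (C * tower_len rs).-1 /\
              c * tower_len rs + tower_lo u <= p <= c * tower_len rs + tower_hi u.
  have /andP[le_lh lt_hL] := tower_lo_hi u.
  have := block_offset_lt c lt_hL.
  by exists (c * tower_len rs + tower_lo u); lia.
case=> [[c u]|] [[c' u']|] /= => [|_|_|//].
- case/andP=> /eqP <- /IH[p [pu pu']].
  by exists (c * tower_len rs + p); rewrite !leq_add2l.
- by have [p [p1 p2]] := apex_overlap c u; exists p.
- exact: apex_overlap.
Qed.

Definition tower_bag rs p := interval_bag (@tower_lo rs) (@tower_hi rs) p.

Lemma tower_bag_Some b rs (c : 'I_C) (u : tower_vertex N C rs) p :
  Some (c, u) \in tower_bag (b :: rs) p ->
  c = p %/ tower_len rs :> nat /\ u \in tower_bag rs (p %% tower_len rs).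
Proof.
rewrite !inE /= => bag_p; have /andP[_ lt_hL] := tower_lo_hi u.
have -> : p = c * tower_len rs + (p - c * tower_len rs) by lia.
by rewrite divnMDl ?modnMDl ?tower_len_gt0 ?divn_small ?modn_small ?addn0 //; lia.
Qed.

(* Besides the apex, a bag only meets the copy [p %/ tower_len rs]. *)
Lemma tower_bag_card rs p : #|tower_bag rs p| <= (size rs).+2.
Proof.
elim: rs p => [|b rs IH] p /=.
  rewrite -(card_in_imset (f := fun k : 'I_N => nat_of_ord k == p)).
    by rewrite (leq_trans (max_card _)) // card_bool.
  move=> x y; rewrite !inE /= => x_p y_p.
  by case: eqP => [ex|nx]; case: eqP => [ey|ny] // _; apply: val_inj => /=; lia.
pose drop_copy (w : tower_vertex N C (b :: rs)) := if w is Some (_, u) then Some u else None.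
rewrite -(card_in_imset (f := drop_copy)); last first.
  move=> [[c u]|] [[c' u']|] bag_w bag_w' //= [eu]; subst u'.
  have [[ec _] [ec' _]] := (tower_bag_Some bag_w, tower_bag_Some bag_w').
  by congr (Some (_, _)); apply: val_inj; rewrite /= ec ec'.
apply: (leq_trans (n := #|None |: [set Some u | u in tower_bag rs (p %% tower_len rs)]|)).
  apply: subset_leq_card; apply/subsetP => _ /imsetP[[[c u]|] /= bag_w ->]; rewrite !inE //.
  by apply/orP; right; apply/imsetP; exists u => //; case: (tower_bag_Some bag_w).
rewrite cardsU1 card_imset; last by move=> ? ? [].
by rewrite -add1n leq_add ?IH //; case: (_ \notin _).
Qed.

Lemma tower_pathwidth rs : pathwidth_le (tower N C rs) (size rs).+1.
Proof.
apply: (@interval_pathwidth (tower N C rs) (tower_len rs) (@tower_lo rs) (@tower_hi rs)).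
- exact: tower_lo_hi.
- exact: tower_adj_overlap.
- exact: tower_bag_card.
Qed.

End TowerIntervals.

Lemma reflc_strong_fst (G1 G2 : sgraph) (x y : vertex (strong G1 G2)) :
  reflc (@adj _) x y -> reflc (@adj G1) x.1 y.1.
Proof.
rewrite /reflc /= /strong_adj => /orP[/eqP->|]; first by rewrite eqxx.
by case/or3P=> /andP[] => [/eqP->|_ ->|->]; rewrite ?eqxx ?orbT.
Qed.

Lemma reflc_strong_snd (G1 G2 : sgraph) (x y : vertex (strong G1 G2)) :
  reflc (@adj _) x y -> reflc (@adj G2) x.2 y.2.
Proof.
rewrite /reflc /= /strong_adj => /orP[/eqP->|]; first by rewrite eqxx.
by case/or3P=> /andP[] => [_ ->|/eqP->|_ ->]; rewrite ?eqxx ?orbT.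
Qed.

Lemma reflc_Pgraph_dist m (a b : 'I_m) :
  reflc (@adj (Pgraph m)) a b -> a <= b.+1 /\ b <= a.+1.
Proof. by rewrite /reflc /= /path_adj => /or3P[/eqP->|/eqP|/eqP]; lia. Qed.

(* Vertices near [r] have [P]-coordinates within [2] of that of [f r], so a
   fibre over [H] injects into [[0, 4] * K_l]. *)
Lemma strong_fibre_card (G H : sgraph) m l (r : vertex G)
    (f : vertex G -> vertex (strong (strong H (Pgraph m)) (Kgraph l))) :
  injective f -> (forall u v, adj u v -> adj (f u) (f v)) ->
  (forall v, exists w, reflc (@adj G) r w && reflc (@adj G) w v) ->
  forall h, #|[set v | (f v).1.1 == h]| <= 5 * l.
Proof.
move=> f_inj f_hom radius2 h.
pose psi v : nat := (f v).1.2.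
have psi_near u v : reflc (@adj G) u v -> psi u <= (psi v).+1 /\ psi v <= (psi u).+1.
  move=> /orP[/eqP->|/f_hom uv]; first by [].
  by apply/reflc_Pgraph_dist/reflc_strong_snd/reflc_strong_fst; rewrite /reflc uv orbT.
have psi_r v : psi v <= psi r + 2 /\ psi r <= psi v + 2.
  have [w /andP[/psi_near rw /psi_near wv]] := radius2 v; lia.
pose g v : ('I_5 * 'I_l)%type := (inord (psi v + 2 - psi r), (f v).2).
rewrite -(card_in_imset (f := g)).
  by rewrite (leq_trans (max_card _)) // card_prod !card_ord.
move=> v w; rewrite !inE => /eqP fv_h /eqP fw_h [/(congr1 val)] /=.
have [[? ?] [? ?]] := (psi_r v, psi_r w).
rewrite !inordK; try lia; move=> e_shift e2.
have e_psi : psi v = psi w by lia.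
apply: f_inj; move: fv_h fw_h e2 e_psi; rewrite /psi.
by case: (f v) => [[? ?] ?]; case: (f w) => [[? ?] ?] /= -> -> -> /val_inj->.
Qed.

Section Models.
Variable H : sgraph.
Implicit Types (A B S : pred (vertex H)) (U W : {set vertex H}).

Definition touching U W := exists x y, [/\ x \in U, y \in W & adj x y].

Definition meets U (P : pred (vertex H)) := exists2 x, x \in U & P x.

Definition small_branch_set U S := [/\ connected_set U, #|U| <= 2 & {subset U <= S}].

(* A 2-small model of [P_n + K_{i,j}] inside [S]: [X t] for the path and
   [Y s] for a vertex of [K_{i,j}] on side [nth false rs s].  The [meets]
   conditions are what lets a new apex touch these branch sets. *)
Record coloured_model n S A B (rs : seq bool) (X Y : nat -> {set vertex H}) : Prop := {
  model_X : forall t, t < n -> [/\ small_branch_set (X t) S, meets (X t) A & meets (X t) B];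
  model_Y : forall s, s < size rs ->
    small_branch_set (Y s) S /\ meets (Y s) (if nth false rs s then A else B);
  model_disjoint_XX : forall t t', t < n -> t' < n -> t != t' -> [disjoint X t & X t'];
  model_disjoint_YY : forall s s', s < size rs -> s' < size rs -> s != s' ->
    [disjoint Y s & Y s'];
  model_disjoint_XY : forall t s, t < n -> s < size rs -> [disjoint X t & Y s];
  model_touching_XX : forall t, t.+1 < n -> touching (X t) (X t.+1);
  model_touching_XY : forall t s, t < n -> s < size rs -> touching (X t) (Y s);
  model_touching_YY : forall s s', s < size rs -> s' < size rs ->
    nth false rs s != nth false rs s' -> touching (Y s) (Y s') }.

Lemma touching_sym U W : touching U W -> touching W U.
Proof. by case=> x [y [xU yW xy]]; exists y, x; rewrite adj_sym. Qed.

Lemma connected_set1 (x : vertex H) : connected_set [set x].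
Proof.
split; first by apply/set0Pn; exists x; rewrite inE.
by move=> y z; rewrite !inE => /eqP-> /eqP->; apply: connect0.
Qed.

Lemma connected_set2 (x y : vertex H) : adj x y -> connected_set [set x; y].
Proof.
move=> xy; split; first by apply/set0Pn; exists x; rewrite !inE eqxx.
have [xin yin] : x \in [set x; y] /\ y \in [set x; y] by rewrite !inE !eqxx orbT.
move=> u v; rewrite !inE => /orP[] /eqP-> /orP[] /eqP->; rewrite ?connect0 //;
  by apply: connect1; rewrite /= xin yin // adj_sym.
Qed.

Lemma small_branch_set1 x S : S x -> small_branch_set [set x] S.
Proof.
move=> Sx; split; [exact: connected_set1 | by rewrite cards1 |].
by move=> y; rewrite inE => /eqP->.
Qed.

Lemma small_branch_set_sub U S S' :
  {subset S <= S'} -> small_branch_set U S -> small_branch_set U S'.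
Proof. by move=> sSS' [? ? sUS]; split=> // x /sUS/sSS'. Qed.

Lemma meets_sub U P P' : {subset P <= P'} -> meets U P -> meets U P'.
Proof. by move=> sPP' [x xU Px]; exists x => //; apply: sPP'. Qed.

Lemma path_pairs_model n S A B (R : rel (vertex H)) (p : seq (vertex H)) x0 :
  (forall a b, R a b -> [/\ adj a b, S a, S b & (A a && B b) || (B a && A b)]) ->
  uniq p -> 2 * n <= size p -> sorted R p ->
  coloured_model n S A B [::]
    (fun t => [set nth x0 p (2 * t); nth x0 p (2 * t).+1]) (fun _ => set0).
Proof.
move=> R_edge p_uniq size_p /(sortedP x0) p_R.
have R_at t : t < n -> R (nth x0 p (2 * t)) (nth x0 p (2 * t).+1) by move=> ?; apply: p_R; lia.
split=> // [t lt_tn|t t' lt_tn lt_t'n ne_tt'|t lt_t1n].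
- have [xy Sx Sy AB] := R_edge _ _ (R_at t lt_tn).
  split.
  + split; [exact: connected_set2 | by rewrite cards2; case: (_ != _) |].
    by move=> z; rewrite !inE => /orP[] /eqP->.
  + by case/orP: AB => /andP[? ?]; [exists (nth x0 p (2 * t)) | exists (nth x0 p (2 * t).+1)];
      rewrite ?inE ?eqxx ?orbT.
  + by case/orP: AB => /andP[? ?]; [exists (nth x0 p (2 * t).+1) | exists (nth x0 p (2 * t))];
      rewrite ?inE ?eqxx ?orbT.
- rewrite disjoint_subset; apply/subsetP => z; rewrite !inE.
  have lt_size i : i < 2 * n -> i < size p by move/leq_trans; apply.
  by case/orP=> /eqP->; apply/negP; case/orP; rewrite nth_uniq ?lt_size //; lia.
- exists (nth x0 p (2 * t).+1), (nth x0 p (2 * t.+1)); rewrite !inE !eqxx orbT.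
  by have [] := R_edge _ _ (p_R (2 * t).+1 _); rewrite ?mulnS ?add2n //; lia.
Qed.

Section AddApex.
Variables (n : nat) (S A B S' A' B' : pred (vertex H)) (rs : seq bool) (b : bool).
Variables (X Y : nat -> {set vertex H}) (c : vertex H).
Hypotheses (sub_S : {subset S' <= S}) (sub_A : {subset A' <= A}) (sub_B : {subset B' <= B}).
Hypotheses (S_c : S c) (colour_c : (if b then A else B) c) (c_notin : ~~ S' c).
Hypothesis c_adj : forall h, (if b then B' else A') h -> adj c h.
Hypothesis model : coloured_model n S' A' B' rs X Y.

Lemma touching_apex U : meets U (if b then B' else A') -> touching U [set c].
Proof. by case=> x xU /c_adj cx; exists x, c; rewrite inE eqxx adj_sym. Qed.

Lemma disjoint_apex U : {subset U <= S'} -> [disjoint [set c] & U].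
Proof.
move=> sUS'; rewrite disjoint_sym disjoint_subset; apply/subsetP => x /sUS' S'x.
by rewrite !inE; apply: contraNneq c_notin => <-.
Qed.

Lemma coloured_model_cons :
  coloured_model n S A B (b :: rs) X (fun s => if s is s'.+1 then Y s' else [set c]).
Proof.
have [mX mY dXX dYY dXY tXX tXY tYY] := model.
have sX t : t < n -> {subset X t <= S'} by move=> /mX[[]].
have sY s : s < size rs -> {subset Y s <= S'} by move=> /mY[[]].
split=> //= [t lt_tn|[|s] lt_s|[|s] [|s'] //= lt_s lt_s' ne_ss'|t [|s] //= lt_tn lt_s|
             t [|s] //= lt_tn lt_s|[|s] [|s'] //= lt_s lt_s' ne_b].
- have [Xt AXt BXt] := mX t lt_tn.
  by split; [apply: small_branch_set_sub sub_S Xt | apply: meets_sub sub_A AXt |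
             apply: meets_sub sub_B BXt].
- by split; [apply: small_branch_set1 | exists c; rewrite ?inE].
- have [Ys meets_Ys] := mY s lt_s; split; first exact: small_branch_set_sub sub_S Ys.
  by move: meets_Ys; rewrite /=; case: (nth false rs s);
     [apply: meets_sub sub_A | apply: meets_sub sub_B].
- exact: disjoint_apex (sY _ lt_s').
- by rewrite disjoint_sym; apply: disjoint_apex (sY _ lt_s).
- exact: dYY.
- by rewrite disjoint_sym; apply: disjoint_apex (sX _ lt_tn).
- exact: dXY.
- by apply: touching_apex; have [_ ? ?] := mX t lt_tn; case: (b).
- exact: tXY.
- by rewrite eqxx in ne_b.
- apply/touching_sym/touching_apex; have [_] := mY s' lt_s'.
  by case: (b) (nth _ _ _) ne_b => [] [].
- apply: touching_apex; have [_] := mY s lt_s.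
  by case: (b) (nth _ _ _) ne_b => [] [].
- exact: tYY.
Qed.

End AddApex.
End Models.

Definition image_in (T : finType) (U : eqType) (phi : T -> U) (P : pred T) : pred U :=
  fun h => [exists v, P v && (phi v == h)].

Lemma image_in_comp (T T' : finType) (U : eqType) (phi : T -> U) (g : T' -> T) (P : pred T) :
  {subset image_in (phi \o g) (P \o g) <= image_in phi P}.
Proof. by move=> h /existsP[v Pv_h]; apply/existsP; exists (g v). Qed.

Lemma image_in_mem (T : finType) (U : eqType) (phi : T -> U) (P : pred T) v :
  P v -> image_in phi P (phi v).
Proof. by move=> Pv; apply/existsP; exists v; rewrite Pv eqxx. Qed.

Lemma count_enum (T : finType) (P : pred T) : count P (enum T) = #|P|.
Proof. by rewrite cardE -size_filter /enum_mem filter_predT. Qed.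

Lemma sorted_iota_succ m k : sorted (fun a b => b == a.+1) (iota m k).
Proof. by elim: k m => [|[|k] IH] m //=; rewrite eqxx; apply: IH m.+1. Qed.

Section PathImage.
Variables (N : nat) (H : sgraph) (phi : 'I_N -> vertex H).

Definition image_edge : rel (vertex H) := fun a b =>
  (a != b) && [exists k, exists k', [&& path_adj k k', phi k == a & phi k' == b]].

Let A := image_in phi (fun v => odd v).
Let B := image_in phi (fun v => ~~ odd v).

Lemma image_edge_bichromatic :
  (forall u v, path_adj u v -> reflc (@adj H) (phi u) (phi v)) ->
  forall a b, image_edge a b ->
  [/\ adj a b, image_in phi predT a, image_in phi predT b & (A a && B b) || (B a && A b)].
Proof.
move=> phi_hom a b /andP[ne_ab /existsP[k /existsP[k' /and3P[kk' /eqP ka /eqP k'b]]]].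
have [/eqP e|ab] := orP (phi_hom _ _ kk'); first by move: ne_ab; rewrite -ka -k'b e eqxx.
subst a b; split; [done | exact: image_in_mem | exact: image_in_mem |].
have odd_kk' : odd k' = ~~ odd k by case/orP: kk' => /eqP <- /=; rewrite ?negbK.
by case: (boolP (odd k)) => odd_k; apply/orP; [left | right];
   apply/andP; split; apply: image_in_mem; rewrite /= ?odd_kk' ?odd_k.
Qed.

Lemma image_walk_sorted : sorted (reflc image_edge) [seq phi v | v <- enum 'I_N].
Proof.
have succ_sorted : sorted (relpre val (fun a b => b == a.+1)) (enum 'I_N).
  by rewrite -sorted_map val_enum_ord sorted_iota_succ.
rewrite sorted_map; apply: sub_sorted succ_sorted => u v /= /eqP uv.
rewrite /reflc /image_edge; case: eqP => //= _.
by apply/existsP; exists u; apply/existsP; exists v; rewrite /path_adj uv !eqxx.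
Qed.

Lemma path_image_model n M :
  0 < M -> M * M.+2 ^ (2 * n) <= N ->
  (forall u v, path_adj u v -> reflc (@adj H) (phi u) (phi v)) ->
  (forall h, #|[set v | phi v == h]| <= M) ->
  exists X, coloured_model n (image_in phi predT) A B [::] X (fun _ => set0).
Proof.
move=> M_gt0 N_big phi_hom fibre.
have N_gt0 : 0 < N by rewrite (leq_trans _ N_big) // muln_gt0 M_gt0 expn_gt0.
pose walk := [seq phi v | v <- enum 'I_N].
have walk_count y : count_mem y walk <= M.
  by rewrite count_map count_enum (leq_trans _ (fibre y)) // cardsE.
have walk_long : M.+2 ^ (2 * n) <= size (undup walk).
  rewrite -(leq_pmul2l M_gt0) (leq_trans N_big) //.
  by rewrite (leq_trans _ (size_le_undup walk_count)) // size_map size_enum_ord.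
have [p [p_uniq p_size p_sorted]] :=
  sorted_walk_long_path walk_count image_walk_sorted walk_long.
pose x0 := phi (Ordinal N_gt0).
exists (fun t => [set nth x0 p (2 * t); nth x0 p (2 * t).+1]).
apply: path_pairs_model (image_edge_bichromatic phi_hom) p_uniq _ p_sorted.
by rewrite p_size.
Qed.

End PathImage.

Lemma free_copy (I T : finType) (F : {set option (I * T)}) :
  #|F| < #|I| -> exists c, forall v, Some (c, v) \notin F.
Proof.
move=> ltFI; have /card_gt0P[c0 _] : 0 < #|I| by apply: leq_ltn_trans ltFI.
pose copy (w : option (I * T)) := if w is Some (c, _) then c else c0.
have /card_gt0P[c] : 0 < #|~: (copy @: F)|.
  rewrite -(ltn_add2l #|copy @: F|) addn0 cardsC.
  exact: leq_ltn_trans (leq_imset_card _ _) ltFI.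
rewrite inE => c_free; exists c => v; apply: contraNN c_free => Fv.
by apply/imsetP; exists (Some (c, v)).
Qed.

Lemma tower_coloured_model n M N rs (H : sgraph) (phi : tower_vertex N M.+1 rs -> vertex H) :
  0 < M -> M * M.+2 ^ (2 * n) <= N ->
  (forall u v, tower_adj u v -> reflc (@adj H) (phi u) (phi v)) ->
  (forall h, #|[set v | phi v == h]| <= M) ->
  exists X Y, coloured_model n (image_in phi predT) (image_in phi (@tower_colour _ _ rs))
                                (image_in phi (fun v => ~~ tower_colour v)) rs X Y.
Proof.
move=> M_gt0 N_big; elim: rs phi => [|b rs IH] phi phi_hom fibre.
  by have [X model] := path_image_model M_gt0 N_big phi_hom fibre; exists X, (fun _ => set0).
pose c := phi None.
have [c0 c0_free] : exists c0, forall v, Some (c0, v) \notin [set w | phi w == c].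
  by apply: free_copy; rewrite card_ord ltnS fibre.
pose phi' v := phi (Some (c0, v)).
have phi'_hom u v : tower_adj u v -> reflc (@adj H) (phi' u) (phi' v).
  by move=> uv; apply: phi_hom; rewrite /= eqxx.
have fibre' h : #|[set v | phi' v == h]| <= M.
  rewrite (leq_trans _ (fibre h)) // -(card_imset _ (f := fun v => Some (c0, v))).
    by apply/subset_leq_card/subsetP => w /imsetP[v]; rewrite !inE => phi'v ->.
  by move=> ? ? [].
have [X [Y model]] := IH phi' phi'_hom fibre'.
have c_notin : ~~ image_in phi' predT c.
  by apply/negP=> /existsP[v /= /eqP phi'v]; have := c0_free v; rewrite inE -phi'v eqxx.
exists X, (fun s => if s is s'.+1 then Y s' else [set c]).
apply: coloured_model_cons model => //.
- exact: (image_in_comp (g := fun v => Some (c0, v))).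
- exact: (image_in_comp (g := fun v => Some (c0, v))).
- exact: (image_in_comp (g := fun v => Some (c0, v))).
- exact: image_in_mem.
- by case: ifP => bE; apply: image_in_mem; rewrite /= bE.
- move=> h; case: ifP => bE /existsP[v /andP[col_v /eqP <-]].
  all: have col_vb : tower_colour v != b by rewrite bE; case: (tower_colour v) col_v.
  all: case/orP: (phi_hom None (Some (c0, v)) col_vb) => // /eqP c_v.
  all: by case/negP: c_notin; rewrite /c c_v; exact: (@image_in_mem _ _ phi').
Qed.

Section CompleteBipartiteIndex.
Variables i j : nat.

Definition side_bits := nseq i true ++ nseq j false.

Definition kbip_index (k : 'I_i + 'I_j) : nat :=
  match k with inl s => s | inr s => i + s end.

Lemma size_side_bits : size side_bits = i + j.
Proof. by rewrite size_cat !size_nseq. Qed.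

Lemma kbip_index_lt k : kbip_index k < size side_bits.
Proof. by rewrite size_side_bits; case: k => s /=; have := ltn_ord s; lia. Qed.

Lemma kbip_index_inj : injective kbip_index.
Proof.
case=> s [] s' /= e; have := ltn_ord s; have := ltn_ord s'; try lia.
  by move=> _ _; congr inl; apply: val_inj.
by move=> _ _; congr inr; apply: val_inj => /=; lia.
Qed.

Lemma nth_side_bits k :
  nth false side_bits (kbip_index k) = if k is inl _ then true else false.
Proof.
case: k => s /=; rewrite nth_cat size_nseq.
  by rewrite ltn_ord nth_nseq ltn_ord.
by rewrite ltnNge leq_addr /= nth_nseq addKn ltn_ord.
Qed.

Lemma cbip_adj_side_bits k k' :
  cbip_adj k k' =
  (nth false side_bits (kbip_index k) != nth false side_bits (kbip_index k')).
Proof. by rewrite !nth_side_bits; case: k; case: k'. Qed.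

End CompleteBipartiteIndex.

Lemma coloured_model_minor n i j (H : sgraph) (S A B : pred (vertex H)) X Y :
  coloured_model n S A B (side_bits i j) X Y ->
  small_minor 2 (gjoin (Pgraph n) (Kbip i j)) H.
Proof.
case=> mX mY dXX dYY dXY tXX tXY tYY.
pose mu (v : 'I_n + ('I_i + 'I_j)) :=
  match v with inl t => X t | inr k => Y (kbip_index k) end.
have mu_small v : small_branch_set (mu v) S.
  by case: v => [t|k]; [case: (mX t (ltn_ord t)) | case: (mY _ (kbip_index_lt k))].
exists mu; split=> [v|v|[t|k] [t'|k'] /= ne|[t|k] [t'|k'] /= vw].
- by case: (mu_small v).
- by case: (mu_small v).
- by apply: dXX => //; apply: contraNneq ne => /val_inj->.
- exact: dXY (kbip_index_lt _).
- by rewrite disjoint_sym; apply: dXY (kbip_index_lt _).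
- by apply: dYY; rewrite ?kbip_index_lt //; apply: contraNneq ne => /kbip_index_inj->.
- by case/orP: vw => /eqP e; [|apply: touching_sym]; rewrite -e; apply: tXX; rewrite e.
- exact: tXY (kbip_index_lt _).
- exact/touching_sym/tXY/kbip_index_lt.
- by apply: tYY; rewrite ?kbip_index_lt // -cbip_adj_side_bits.
Qed.

Lemma tower_fibre_card N C rs (H : sgraph) m l
    (f : tower_vertex N C rs -> vertex (strong (strong H (Pgraph m)) (Kgraph l))) :
  1 < N -> 0 < C -> 0 < size rs -> injective f ->
  (forall u v, tower_adj u v -> adj (f u) (f v)) ->
  forall h, #|[set v | (f v).1.1 == h]| <= 5 * l.
Proof.
case: rs f => [//|b rs] f N_gt1 C_gt0 _ f_inj f_hom.
exact: (strong_fibre_card (r := None : vertex (tower N C (b :: rs))) f_inj f_hom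
         (tower_apex_radius2 N_gt1 C_gt0 (b := b) (rs := rs))).
Qed.

Theorem theorem11 (i j l n : nat) :
  1 <= i + j -> 0 < l -> 0 < n ->
  exists G : sgraph,
    [/\ bipartite G, pathwidth_le G (i + j).+1 &
      forall (H : sgraph) (m : nat), 0 < m ->
        subgraph_iso G (strong (strong H (Pgraph m)) (Kgraph l)) ->
        small_minor 2 (gjoin (Pgraph n) (Kbip i j)) H].
Proof.
move=> ij_gt0 l_gt0 n_gt0.
pose M := 5 * l; pose N := M * M.+2 ^ (2 * n).
have M_gt0 : 0 < M by rewrite muln_gt0.
have N_gt1 : 1 < N by have := expn_gt0 M.+2 (2 * n); rewrite /N /M; nia.
exists (tower N M.+1 (side_bits i j)); split.
- exact: tower_bipartite.
- by rewrite -size_side_bits; apply: tower_pathwidth.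
move=> H m _ [f [f_inj f_hom]].
have bits_nonempty : 0 < size (side_bits i j) by rewrite size_side_bits.
have fibre := tower_fibre_card N_gt1 (ltn0Sn M) bits_nonempty f_inj f_hom.
have phi_hom u v : tower_adj u v -> reflc (@adj H) (f u).1.1 (f v).1.1.
  by move=> /f_hom uv; do 2!apply: reflc_strong_fst; rewrite /reflc uv orbT.
have [X [Y model]] := tower_coloured_model M_gt0 (leqnn N) phi_hom fibre.
exact: coloured_model_minor model.
Qed.
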